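(* For $\kappa\in(8/3,8)$, the function $\gamma_\kappa$ is strictly convex on $[0,\infty)$.
   Context: $\Lambda_\kappa(\lambda)=\log\big(-\cos(4\pi/\kappa)/\cos(\pi\sqrt{(1-4/\kappa)^2+8\lambda/\kappa})\big)$ for $\lambda<1-\frac2\kappa-\frac{3\kappa}{32}$ (with $\cos(\pi\sqrt{\cdot})=\cosh(\pi\sqrt{-\cdot})$ for negative argument) and $+\infty$ otherwise; $\Lambda_\kappa^\star(x)=\sup_\lambda(\lambda x-\Lambda_\kappa(\lambda))$; $\gamma_\kappa(\nu)=\nu\Lambda_\kappa^\star(1/\nu)$ for $\nu>0$ and $\gamma_\kappa(0)=1-\frac2\kappa-\frac{3\kappa}{32}$. *)

From Stdlib Require Import Reals Lra Classical ClassicalEpsilon.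
Open Scope R_scope.

Definition cos_pi_sqrt (u : R) : R :=
  if Rle_dec 0 u then cos (PI * sqrt u) else cosh (PI * sqrt (- u)).

(* threshold: Lambda_kappa is finite exactly for lambda < lam0 kappa *)
Definition lam0 (k : R) : R := 1 - 2 / k - 3 * k / 32.

(* finite branch of Lambda_kappa (only meaningful for l < lam0 k; +infinity otherwise) *)
Definition Lambda (k l : R) : R :=
  ln (- cos (4 * PI / k) / cos_pi_sqrt ((1 - 4 / k) ^ 2 + 8 * l / k)).

(* the set { l x - Lambda(l) : l in the effective domain of Lambda };
   values l >= lam0 k contribute -infinity and do not affect the sup *)
Definition LStar_set (k x : R) : R -> Prop :=
  fun y => exists l, l < lam0 k /\ y = l * x - Lambda k l.

(* Legendre transform Lambda^*_kappa(x) = sup_l (l x - Lambda(l)), as a real number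
   when the sup is finite (the least upper bound); default 0 if it is +infinity
   (this never happens for x > 0, the only arguments used below). *)
Definition LambdaStar (k x : R) : R :=
  match excluded_middle_informative (exists m, is_lub (LStar_set k x) m) with
  | left H => proj1_sig (constructive_indefinite_description _ H)
  | right _ => 0
  end.

Definition gamma (k nu : R) : R :=
  if Rlt_dec 0 nu then nu * LambdaStar k (1 / nu) else lam0 k.

From Stdlib Require Import Reals Lra ClassicalEpsilon.
From Coquelicot Require Import Coquelicot.
Open Scope R_scope.

(* For nu > 0 one has gamma(nu) = nu Lambda^*(1/nu) = sup_l (l - nu Lambda(l)),
   and gamma(0) = lam0 = sup of the domain of Lambda: gamma is the upper envelope
   of the affine functions nu |-> l - nu Lambda(l).  Such an envelope is convex;
   it is strictly convex provided
   (a) for every nu > 0 the supremum is attained at some m, and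
   (b) a point m can be a maximizer for at most one slope 1/nu.
   Indeed, at nu = t x + (1 - t) y the supporting line of gamma through m then
   lies strictly below gamma at every other point z >= 0, and averaging the two
   strict inequalities at x and y gives the claim. *)

Lemma cosh_pos y : 0 < cosh y.
Proof. unfold cosh. pose proof (exp_pos y). pose proof (exp_pos (- y)). lra. Qed.

Lemma cosh_ge_1 y : 1 <= cosh y.
Proof. unfold cosh. pose proof (exp_ineq1_le y). pose proof (exp_ineq1_le (- y)). lra. Qed.

Lemma sinh_ge_id t : 0 <= t -> t <= sinh t.
Proof.
  intros ht. destruct (Req_dec t 0) as [->|ht0].
  - unfold sinh. rewrite Ropp_0, exp_0. lra.
  - destruct (MVT_cor2 sinh cosh 0 t) as [c [Hc _]];
      [lra | intros; apply derivable_pt_lim_sinh |].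
    assert (sinh 0 = 0) by (unfold sinh; rewrite Ropp_0, exp_0; lra).
    pose proof (cosh_ge_1 c). nra.
Qed.

Lemma sin_le_id t : 0 <= t -> sin t <= t.
Proof.
  intros ht. destruct (Req_dec t 0) as [->|ht0]; [rewrite sin_0; lra |].
  destruct (MVT_cor2 sin cos 0 t) as [c [Hc _]];
    [lra | intros; apply derivable_pt_lim_sin |].
  rewrite sin_0 in Hc. pose proof (COS_bound c). nra.
Qed.

Lemma cosh_ge_quadratic y : 0 <= y -> 1 + y * y / 2 <= cosh y.
Proof.
  intros hy.
  assert (Hs : y / 2 <= sinh (y / 2)) by (apply sinh_ge_id; lra).
  assert (Hhalf : cosh y = 1 + 2 * sinh (y / 2) * sinh (y / 2)).
  { unfold cosh, sinh.
    replace y with (y / 2 + y / 2) at 1 by field.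
    replace (- y) with (- (y / 2) + - (y / 2)) by field.
    rewrite !exp_plus.
    assert (E : exp (y / 2) * exp (- (y / 2)) = 1)
      by (rewrite <- exp_plus, Rplus_opp_r; apply exp_0).
    nra. }
  nra.
Qed.

Lemma cosh_le_exp y : 0 <= y -> cosh y <= exp y.
Proof.
  intros hy. unfold cosh.
  destruct (Req_dec y 0) as [->|hy0].
  - rewrite Ropp_0. lra.
  - assert (exp (- y) < exp y) by (apply exp_increasing; lra). lra.
Qed.

Lemma cos_pi_sqrt_nonneg u : 0 <= u -> cos_pi_sqrt u = cos (PI * sqrt u).
Proof. intros hu. unfold cos_pi_sqrt. destruct (Rle_dec 0 u); [reflexivity | lra]. Qed.

Lemma cos_pi_sqrt_neg u : u < 0 -> cos_pi_sqrt u = cosh (PI * sqrt (- u)).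
Proof. intros hu. unfold cos_pi_sqrt. destruct (Rle_dec 0 u); [lra | reflexivity]. Qed.

Lemma cos_pi_sqrt_0 : cos_pi_sqrt 0 = 1.
Proof. rewrite cos_pi_sqrt_nonneg, sqrt_0, Rmult_0_r by lra. apply cos_0. Qed.

(* Since sqrt vanishes on nonpositive reals, both branches can be added into one
   formula valid everywhere; this gives continuity across u = 0 for free. *)
Lemma cos_pi_sqrt_glue u :
  cos_pi_sqrt u = cos (PI * sqrt u) + cosh (PI * sqrt (- u)) - 1.
Proof.
  assert (Hc0 : cosh 0 = 1) by (unfold cosh; rewrite Ropp_0, exp_0; lra).
  destruct (Rle_dec 0 u) as [hu|hu].
  - rewrite cos_pi_sqrt_nonneg, (sqrt_neg_0 (- u)), Rmult_0_r, Hc0 by lra. ring.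
  - rewrite cos_pi_sqrt_neg, (sqrt_neg_0 u), Rmult_0_r, cos_0 by lra. ring.
Qed.

Lemma cos_pi_sqrt_continuous u : continuity_pt cos_pi_sqrt u.
Proof.
  assert (Hpisqrt : forall v, continuous (fun v => PI * sqrt v) v).
  { intros v. apply (continuous_mult (fun _ => PI) sqrt);
      [apply continuous_const | apply continuous_sqrt]. }
  assert (Hcos : continuity_pt (fun v => cos (PI * sqrt v)) u).
  { apply continuity_pt_filterlim, (continuous_cos_comp (fun v => PI * sqrt v)), Hpisqrt. }
  assert (Hcosh : continuity_pt (fun v => cosh (PI * sqrt (- v))) u).
  { apply continuity_pt_filterlim.
    apply (continuous_comp (fun v => PI * sqrt (- v)) cosh).
    - apply (continuous_comp Ropp (fun v => PI * sqrt v)); [| apply Hpisqrt].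
      apply (ex_derive_continuous Ropp). auto_derive. auto.
    - apply (ex_derive_continuous cosh). unfold cosh. auto_derive. auto. }
  apply (continuity_pt_ext (fun v => cos (PI * sqrt v) + cosh (PI * sqrt (- v)) - 1)).
  { intros v. symmetry. apply cos_pi_sqrt_glue. }
  apply continuity_pt_minus; [apply continuity_pt_plus; assumption |].
  apply continuity_pt_const. intros a b. reflexivity.
Qed.

(* On [0, 1/4) the angle PI * sqrt u lies in [0, PI/2). *)
Lemma sqrt_lt_half u : 0 <= u -> u < 1/4 -> sqrt u < 1/2.
Proof. intros h1 h2. pose proof (sqrt_sqrt u h1). pose proof (sqrt_pos u). nra. Qed.

Lemma cos_pi_sqrt_pos u : u < 1/4 -> 0 < cos_pi_sqrt u.
Proof.
  intros hu. destruct (Rle_dec 0 u) as [h0|h0].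
  - rewrite cos_pi_sqrt_nonneg by lra.
    pose proof (sqrt_lt_half u h0 hu). pose proof (sqrt_pos u). pose proof PI_RGT_0.
    apply cos_gt_0; nra.
  - rewrite cos_pi_sqrt_neg by lra. apply cosh_pos.
Qed.

(* Near u = 1/4 the function vanishes at least linearly: this makes
   Lambda blow up at the right end of its domain. *)
Lemma cos_pi_sqrt_upper u : 0 <= u -> u < 1/4 -> cos_pi_sqrt u <= 2 * PI * (1/4 - u).
Proof.
  intros h0 hu. rewrite cos_pi_sqrt_nonneg by lra.
  pose proof (sqrt_lt_half u h0 hu). pose proof (sqrt_pos u). pose proof (sqrt_sqrt u h0).
  pose proof PI_RGT_0. pose proof PI_4.
  set (s := sqrt u) in *.
  replace (PI * s) with (PI / 2 - PI * (1/2 - s)) by field.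
  rewrite cos_shift.
  pose proof (sin_le_id (PI * (1/2 - s)) ltac:(nra)).
  assert (1/2 - s <= 2 * (1/4 - u)) by nra.
  nra.
Qed.

Lemma cos_pi_sqrt_ge_quadratic u : u < 1/4 -> 1 - PI ^ 2 * u / 2 <= cos_pi_sqrt u.
Proof.
  intros hu. pose proof PI_RGT_0. destruct (Rle_dec 0 u) as [h0|h0].
  - rewrite cos_pi_sqrt_nonneg by lra.
    pose proof (sqrt_lt_half u h0 hu). pose proof (sqrt_pos u). pose proof (sqrt_sqrt u h0).
    destruct (cos_bound (PI * sqrt u) 0) as [Hcos _]; try nra.
    unfold cos_approx, cos_term in Hcos. simpl in Hcos. nra.
  - rewrite cos_pi_sqrt_neg by lra.
    pose proof (sqrt_sqrt (- u) ltac:(lra)). pose proof (sqrt_pos (- u)).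
    pose proof (cosh_ge_quadratic (PI * sqrt (- u))). nra.
Qed.

(* Away from 0 the function is
   itself smooth; at 0, where the two branches meet, the quadratic minorant
   above is used instead, so no differentiability at 0 is ever required. *)
Lemma cos_pi_sqrt_local_minorant u0 : u0 < 1/4 ->
  exists (c : R -> R) (r : R), 0 < r /\ ex_derive c u0 /\ c u0 = cos_pi_sqrt u0 /\
    forall u, Rabs (u - u0) < r -> 0 < c u <= cos_pi_sqrt u.
Proof.
  intros hu0. pose proof PI_RGT_0. destruct (Rtotal_order u0 0) as [hneg | [hz | hpos]].
  - exists (fun u => cosh (PI * sqrt (- u))), (- u0).
    split; [lra | split; [unfold cosh; auto_derive; lra | split]].
    + rewrite cos_pi_sqrt_neg by lra. reflexivity.
    + intros u hu. apply Rabs_def2 in hu.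
      rewrite cos_pi_sqrt_neg by lra. split; [apply cosh_pos | lra].
  - subst u0. exists (fun u => 1 - PI ^ 2 * u / 2), (1/8).
    split; [lra | split; [auto_derive; auto | split]].
    + rewrite cos_pi_sqrt_0. lra.
    + intros u hu. apply Rabs_def2 in hu. rewrite Rminus_0_r in hu.
      assert (PI * PI <= 16) by (pose proof PI_4; nra).
      split; [simpl; nra | apply cos_pi_sqrt_ge_quadratic; lra].
  - exists (fun u => cos (PI * sqrt u)), (Rmin u0 (1/4 - u0)).
    pose proof (Rmin_l u0 (1/4 - u0)). pose proof (Rmin_r u0 (1/4 - u0)).
    split; [apply Rmin_pos; lra | split; [auto_derive; lra | split]].
    + rewrite cos_pi_sqrt_nonneg by lra. reflexivity.
    + intros u hu. apply Rabs_def2 in hu.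
      rewrite <- cos_pi_sqrt_nonneg by lra. split; [apply cos_pi_sqrt_pos |]; lra.
Qed.

Lemma cos_pi_sqrt_le_exp u : u <= 0 -> cos_pi_sqrt u <= exp (PI * sqrt (- u)).
Proof.
  intros hu. destruct (Req_dec u 0) as [->|hu0].
  - rewrite cos_pi_sqrt_0, Ropp_0, sqrt_0, Rmult_0_r, exp_0. lra.
  - rewrite cos_pi_sqrt_neg by lra. apply cosh_le_exp.
    pose proof PI_RGT_0. pose proof (sqrt_pos (- u)). nra.
Qed.

Definition is_maximizer (L : R -> R) (b x m : R) : Prop :=
  m < b /\ forall l, l < b -> l * x - L l <= m * x - L m.

Definition touched_by_smooth_majorant (L : R -> R) (m : R) : Prop :=
  exists (psi : R -> R) (r : R), 0 < r /\ ex_derive psi m /\ psi m = L m /\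
    forall l, Rabs (l - m) < r -> L l <= psi l.

Section DualFamily.

Variables (L : R -> R) (b : R).

(* First-order condition: at a maximizer m the slope x equals psi'(m) for any
   touching differentiable majorant psi, since m is a local maximum of
   l |-> l x - psi l. *)
Lemma maximizer_slope_eq x m psi r :
  is_maximizer L b x m -> 0 < r -> ex_derive psi m -> psi m = L m ->
  (forall l, Rabs (l - m) < r -> L l <= psi l) -> x = Derive psi m.
Proof.
  intros [hm Hmax] hr [d Hd] Hpsi Hmaj.
  rewrite (is_derive_unique psi m d Hd).
  pose proof (Rmin_l r (b - m)). pose proof (Rmin_r r (b - m)).
  assert (hr' : 0 < Rmin r (b - m)) by (apply Rmin_pos; lra).
  set (r' := Rmin r (b - m)) in *.
  assert (Hlin : derivable_pt_lim (fun l => l * x - psi l) m (x - d)).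
  { apply is_derive_Reals.
    apply (is_derive_minus (fun l => l * x) psi); [| exact Hd].
    auto_derive; [auto | ring]. }
  assert (Hcrit : x - d = 0).
  { apply (deriv_maximum (fun l => l * x - psi l) (m - r') (m + r') m
             (exist _ (x - d) Hlin)); try lra.
    intros l h1 h2.
    assert (hl : Rabs (l - m) < r) by (apply Rabs_def1; lra).
    pose proof (Hmaj l hl). pose proof (Hmax l ltac:(lra)). lra. }
  lra.
Qed.

Lemma maximizer_rescale z m : 0 < z ->
  is_maximizer L b (1 / z) m <-> m < b /\ forall l, l < b -> l - z * L l <= m - z * L m.
Proof.
  intros hz.
  assert (E : forall a, a - z * L a = z * (a * (1 / z) - L a)) by (intros; field; lra).
  unfold is_maximizer. split; intros [hm Hmax]; split; try exact hm; intros l hl;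
    specialize (Hmax l hl).
  - rewrite !E. apply Rmult_le_compat_l; lra.
  - rewrite !E in Hmax. apply Rmult_le_reg_l in Hmax; assumption.
Qed.

Lemma maximizer_slope_unique x y m :
  touched_by_smooth_majorant L m ->
  is_maximizer L b x m -> is_maximizer L b y m -> x = y.
Proof.
  intros (psi & r & hr & hpsi & Heq & Hmaj) Hx Hy.
  rewrite (maximizer_slope_eq x m psi r), (maximizer_slope_eq y m psi r); auto.
Qed.

Variable G : R -> R.
Hypothesis G_at_0 : G 0 = b.
Hypothesis G_at_maximizer :
  forall nu m, 0 < nu -> is_maximizer L b (1 / nu) m -> G nu = m - nu * L m.
Hypothesis maximizer_exists : forall x, 0 < x -> exists m, is_maximizer L b x m.
Hypothesis smooth_majorants : forall m, m < b -> touched_by_smooth_majorant L m.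

(* The line supporting G at nu > 0 through a maximizer m lies strictly below G
   at every other point of [0, +oo): equality at z > 0 would make m a maximizer
   for slope 1/z as well, and at z = 0 it reads m < b. *)
Lemma supporting_line_strict nu m z :
  0 < nu -> is_maximizer L b (1 / nu) m -> 0 <= z -> z <> nu -> m - z * L m < G z.
Proof.
  intros hnu Hm hz hznu. destruct (Rle_lt_or_eq_dec 0 z hz) as [hzp | <-].
  2: { rewrite G_at_0. destruct Hm as [hm _]. lra. }
  destruct (maximizer_exists (1 / z)) as [mz Hmz]; [apply Rdiv_lt_0_compat; lra |].
  rewrite (G_at_maximizer z mz hzp Hmz).
  destruct (Rlt_le_dec (m - z * L m) (mz - z * L mz)) as [hlt | hge]; [exact hlt |].
  exfalso. apply hznu.
  assert (Hmz' : is_maximizer L b (1 / z) m).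
  { apply maximizer_rescale in Hmz as [_ Hmax]; [| exact hzp].
    apply maximizer_rescale; [exact hzp |]. split; [apply Hm |].
    intros l hl. specialize (Hmax l hl). lra. }
  assert (Hslope : 1 / z = 1 / nu).
  { apply (maximizer_slope_unique _ _ m); [apply smooth_majorants, Hm | exact Hmz' | exact Hm]. }
  replace z with (1 / (1 / z)) by (field; lra). rewrite Hslope. field. lra.
Qed.

Lemma dual_strictly_convex x y t :
  0 <= x -> 0 <= y -> x <> y -> 0 < t < 1 ->
  G (t * x + (1 - t) * y) < t * G x + (1 - t) * G y.
Proof.
  intros hx hy hxy ht. set (nu := t * x + (1 - t) * y).
  assert (hnu : 0 < nu).
  { unfold nu. destruct (Rtotal_order x y) as [h | [h | h]]; [nra | contradiction | nra]. }
  assert (hxnu : x <> nu).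
  { unfold nu. intro e. apply hxy. apply (Rmult_eq_reg_l (1 - t)); lra. }
  assert (hynu : y <> nu).
  { unfold nu. intro e. apply hxy. apply (Rmult_eq_reg_l t); lra. }
  destruct (maximizer_exists (1 / nu)) as [m Hm]; [apply Rdiv_lt_0_compat; lra |].
  rewrite (G_at_maximizer nu m hnu Hm).
  pose proof (supporting_line_strict nu m x hnu Hm hx hxnu).
  pose proof (supporting_line_strict nu m y hnu Hm hy hynu).
  unfold nu. nra.
Qed.

End DualFamily.

Lemma max_attained_between (f : R -> R) (b p l0 q : R) :
  p <= l0 <= q -> q < b ->
  (forall c, p <= c <= q -> continuity_pt f c) ->
  (forall l, l <= p -> f l <= f l0) ->
  (forall l, q <= l < b -> f l <= f l0) ->
  exists m, m < b /\ forall l, l < b -> f l <= f m.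
Proof.
  intros hl0 hqb Hcont Hlow Hup.
  destruct (continuity_ab_maj f p q ltac:(lra) Hcont) as [m [Hm hm]].
  pose proof (Hm l0 hl0).
  exists m. split; [lra |]. intros l hl.
  destruct (Rle_dec l p) as [h1 | h1]; [pose proof (Hlow l h1); lra |].
  destruct (Rle_dec q l) as [h2 | h2]; [pose proof (Hup l (conj h2 hl)); lra |].
  apply Hm. lra.
Qed.

Definition Lambda_num (k : R) : R := - cos (4 * PI / k).
Definition Lambda_arg (k l : R) : R := (1 - 4 / k) ^ 2 + 8 * l / k.

Lemma Lambda_unfold k l : Lambda k l = ln (Lambda_num k / cos_pi_sqrt (Lambda_arg k l)).
Proof. reflexivity. Qed.

Section LambdaKappa.

Variable k : R.
Hypothesis hk : 8 / 3 < k < 8.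

Lemma Lambda_arg_eq l : Lambda_arg k l = 1/4 - (8 / k) * (lam0 k - l).
Proof. unfold Lambda_arg, lam0. field. lra. Qed.

(* -cos(4 pi / k) > 0 because 1/2 < 4/k < 3/2: this is where 8/3 < k < 8 is used. *)
Lemma Lambda_num_pos : 0 < Lambda_num k.
Proof.
  unfold Lambda_num. pose proof PI_RGT_0.
  replace (4 * PI / k) with (PI * (4 / k)) by (field; lra).
  assert (h1 : 1/2 < 4 / k) by (apply Rmult_lt_reg_r with k; [lra | field_simplify; lra]).
  assert (h2 : 4 / k < 3/2) by (apply Rmult_lt_reg_r with k; [lra | field_simplify; lra]).
  assert (cos (PI * (4 / k)) < 0) by (apply cos_lt_0; nra).
  lra.
Qed.

Lemma Lambda_arg_lt l : l < lam0 k -> Lambda_arg k l < 1/4.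
Proof.
  intros hl. rewrite Lambda_arg_eq.
  assert (0 < 8 / k) by (apply Rdiv_lt_0_compat; lra). nra.
Qed.

Lemma Lambda_continuous l : l < lam0 k -> continuity_pt (Lambda k) l.
Proof.
  intros hl. pose proof Lambda_num_pos as hA.
  pose proof (cos_pi_sqrt_pos _ (Lambda_arg_lt l hl)) as hc.
  change (continuity_pt
            (comp ln (fun l => Lambda_num k / cos_pi_sqrt (Lambda_arg k l))) l).
  apply continuity_pt_comp.
  - apply (continuity_pt_div (fun _ => Lambda_num k) (comp cos_pi_sqrt (Lambda_arg k)));
      [apply continuity_pt_const; intros ? ?; reflexivity | | unfold comp; lra].
    apply continuity_pt_comp; [| apply cos_pi_sqrt_continuous].
    unfold Lambda_arg. reg.
  - apply continuity_pt_filterlim, continuous_ln, Rdiv_lt_0_compat; assumption.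
Qed.

(* Lambda has a differentiable local majorant touching it at every point of its
   domain; this is all the smoothness the uniqueness argument needs. *)
Lemma Lambda_smooth_majorant m : m < lam0 k -> touched_by_smooth_majorant (Lambda k) m.
Proof.
  intros hm. pose proof Lambda_num_pos as hA.
  assert (hk8 : 0 < 8 / k) by (apply Rdiv_lt_0_compat; lra).
  destruct (cos_pi_sqrt_local_minorant (Lambda_arg k m) (Lambda_arg_lt m hm))
    as (c & r & hr & hc & Hcm & Hmin).
  assert (Hdiff : forall l, Lambda_arg k l - Lambda_arg k m = (8 / k) * (l - m))
    by (intros l; unfold Lambda_arg; field; lra).
  exists (fun l => ln (Lambda_num k / c (Lambda_arg k l))), (r / (8 / k)).
  repeat split.
  - apply Rdiv_lt_0_compat; lra.
  - pose proof (cos_pi_sqrt_pos _ (Lambda_arg_lt m hm)).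
    apply (ex_derive_comp ln (fun l => Lambda_num k / c (Lambda_arg k l))).
    + auto_derive. rewrite Hcm. apply Rdiv_lt_0_compat; lra.
    + apply (ex_derive_div (fun _ => Lambda_num k) (fun l => c (Lambda_arg k l)));
        [apply ex_derive_const | | rewrite Hcm; lra].
      apply (ex_derive_comp c (Lambda_arg k)); [exact hc |].
      unfold Lambda_arg. auto_derive. lra.
  - rewrite Hcm. reflexivity.
  - intros l hl.
    assert (Hu : Rabs (Lambda_arg k l - Lambda_arg k m) < r).
    { rewrite Hdiff, Rabs_mult, (Rabs_pos_eq (8 / k)) by lra.
      apply Rmult_lt_reg_r with (/ (8 / k)); [apply Rinv_0_lt_compat; lra |].
      replace (8 / k * Rabs (l - m) * / (8 / k)) with (Rabs (l - m)) by (field; lra).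
      exact hl. }
    destruct (Hmin _ Hu) as [hc0 hcle].
    rewrite Lambda_unfold. apply ln_le.
    + apply Rdiv_lt_0_compat; lra.
    + apply Rmult_le_compat_l; [lra | apply Rinv_le_contravar; assumption].
Qed.

(* lam0 k - k / 32 is the point where the argument of cos_pi_sqrt vanishes,
   i.e. where the trigonometric and hyperbolic branches of Lambda meet. *)
Lemma Lambda_arg_branch l : Lambda_arg k l = (8 / k) * (l - (lam0 k - k / 32)).
Proof. unfold Lambda_arg, lam0. field. lra. Qed.

Lemma Lambda_at_branch : Lambda k (lam0 k - k / 32) = ln (Lambda_num k).
Proof.
  rewrite Lambda_unfold, Lambda_arg_branch, Rminus_diag, Rmult_0_r, cos_pi_sqrt_0.
  f_equal. field.
Qed.

Lemma Lambda_blowup K : exists q, q < lam0 k /\ forall l, q <= l < lam0 k -> K <= Lambda k l.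
Proof.
  pose proof Lambda_num_pos as hA. pose proof PI_RGT_0.
  set (eps := Lambda_num k * exp (- K)).
  assert (heps : 0 < eps) by (apply Rmult_lt_0_compat; [lra | apply exp_pos]).
  set (w := eps * k / (16 * PI)).
  assert (hw : 0 < w) by (apply Rdiv_lt_0_compat; nra).
  exists (Rmax (lam0 k - k / 32) (lam0 k - w)). split.
  { apply Rmax_lub_lt; lra. }
  intros l [hql hl].
  pose proof (Rmax_l (lam0 k - k / 32) (lam0 k - w)).
  pose proof (Rmax_r (lam0 k - k / 32) (lam0 k - w)).
  assert (hu0 : 0 <= Lambda_arg k l).
  { rewrite Lambda_arg_branch. apply Rmult_le_pos; [apply Rlt_le, Rdiv_lt_0_compat |]; lra. }
  pose proof (Lambda_arg_lt l hl) as hu.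
  assert (Hsmall : cos_pi_sqrt (Lambda_arg k l) <= eps).
  { eapply Rle_trans; [apply cos_pi_sqrt_upper; assumption |].
    rewrite Lambda_arg_eq.
    replace eps with (2 * PI * (8 / k) * w) by (unfold w; field; lra).
    assert (0 < 8 / k) by (apply Rdiv_lt_0_compat; lra).
    assert ((8 / k) * (lam0 k - l) <= (8 / k) * w) by (apply Rmult_le_compat_l; lra).
    nra. }
  pose proof (cos_pi_sqrt_pos _ hu).
  rewrite Lambda_unfold, <- (ln_exp K).
  apply ln_le; [apply exp_pos |].
  replace (exp K) with (Lambda_num k / eps)
    by (unfold eps; rewrite exp_Ropp; field; split; [apply Rgt_not_eq, exp_pos | lra]).
  apply Rmult_le_compat_l; [lra | apply Rinv_le_contravar; assumption].
Qed.

(* On the hyperbolic branch Lambda decreases at most like a square root,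
   so l x - Lambda l tends to -oo as l -> -oo whenever x > 0. *)
Lemma Lambda_lower l : l <= lam0 k - k / 32 ->
  ln (Lambda_num k) - PI * sqrt ((8 / k) * (lam0 k - k / 32 - l)) <= Lambda k l.
Proof.
  intros hl. pose proof Lambda_num_pos as hA.
  assert (Harg : - Lambda_arg k l = (8 / k) * (lam0 k - k / 32 - l))
    by (rewrite Lambda_arg_branch; ring).
  assert (hu : Lambda_arg k l <= 0).
  { assert (0 < 8 / k) by (apply Rdiv_lt_0_compat; lra). nra. }
  pose proof (cos_pi_sqrt_pos (Lambda_arg k l) ltac:(lra)) as hc.
  rewrite <- Harg, Lambda_unfold, ln_div by assumption.
  rewrite <- (ln_exp (PI * sqrt (- Lambda_arg k l))).
  pose proof (ln_le _ _ hc (cos_pi_sqrt_le_exp _ hu)). lra.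
Qed.

(* Far to the left, l x - Lambda l is below its value at the branch point
   lam0 k - k/32: with s = sqrt((8/k)(lam0 k - k/32 - l)) the loss in l x is
   (k x / 8) s^2, while Lambda gains at most PI s. *)
Lemma dual_objective_left x l : 0 < x ->
  l <= lam0 k - k / 32 - 8 * PI ^ 2 / (k * x ^ 2) ->
  l * x - Lambda k l <= (lam0 k - k / 32) * x - Lambda k (lam0 k - k / 32).
Proof.
  intros hx hl. pose proof PI_RGT_0.
  set (lb := lam0 k - k / 32) in *.
  set (c := 8 * PI / (k * x)).
  assert (hc : 0 < c) by (apply Rdiv_lt_0_compat; nra).
  assert (hckx : c * (k * x) = 8 * PI) by (unfold c; field; lra).
  assert (hthr : 8 * PI ^ 2 / (k * x ^ 2) = k / 8 * (c * c)) by (unfold c; field; lra).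
  rewrite hthr in hl.
  assert (hl' : l <= lb) by (assert (0 <= k / 8 * (c * c)) by nra; lra).
  pose proof (Lambda_lower l hl') as Hlow. fold lb in Hlow.
  assert (hd : 0 <= 8 / k * (lb - l))
    by (apply Rmult_le_pos; [apply Rlt_le, Rdiv_lt_0_compat |]; lra).
  pose proof (sqrt_sqrt _ hd) as hss. pose proof (sqrt_pos (8 / k * (lb - l))) as hs0.
  set (s := sqrt (8 / k * (lb - l))) in *.
  assert (hcs : c <= s).
  { assert (c * c <= s * s).
    { rewrite hss. replace (c * c) with (8 / k * (k / 8 * (c * c))) by (field; lra).
      apply Rmult_le_compat_l; [apply Rlt_le, Rdiv_lt_0_compat |]; lra. }
    nra. }
  assert (PI * s <= (lb - l) * x).
  { replace (lb - l) with (k / 8 * (s * s)) by (rewrite hss; field; lra).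
    assert (0 <= s * (s - c) * (k * x)) by (apply Rmult_le_pos; [apply Rmult_le_pos |]; nra).
    nra. }
  unfold lb. rewrite Lambda_at_branch. fold lb. lra.
Qed.

(* For every slope x > 0 the supremum defining Lambda^*(x) is attained: the
   objective is continuous, dominated on the left by dual_objective_left and
   on the right by the blow-up of Lambda. *)
Lemma Lambda_dual_attained x : 0 < x -> exists m, is_maximizer (Lambda k) (lam0 k) x m.
Proof.
  intros hx.
  set (f := fun l => l * x - Lambda k l).
  set (lb := lam0 k - k / 32).
  set (p := lb - 8 * PI ^ 2 / (k * x ^ 2)).
  assert (hp : p <= lb).
  { pose proof PI_RGT_0.
    assert (0 <= 8 * PI ^ 2 / (k * x ^ 2)) by (apply Rlt_le, Rdiv_lt_0_compat; nra).
    unfold p. lra. }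
  destruct (Lambda_blowup (lam0 k * x - f lb)) as [q [hq Hq]].
  pose proof (Rmax_l q lb). pose proof (Rmax_r q lb).
  assert (hqmax : Rmax q lb < lam0 k) by (apply Rmax_lub_lt; unfold lb; lra).
  destruct (max_attained_between f (lam0 k) p lb (Rmax q lb)) as [m [hm Hm]];
    [lra | exact hqmax | | | | exists m; split; assumption].
  - intros l hl. apply continuity_pt_minus; [reg | apply Lambda_continuous; lra].
  - intros l hl. apply dual_objective_left; assumption.
  - intros l [hl1 hl2]. assert (hql : q <= l) by lra. pose proof (Hq l (conj hql hl2)).
    assert (l * x <= lam0 k * x) by (apply Rmult_le_compat_r; lra).
    unfold f in *. lra.
Qed.

End LambdaKappa.

Lemma LambdaStar_at_maximizer k x m :
  is_maximizer (Lambda k) (lam0 k) x m -> LambdaStar k x = m * x - Lambda k m.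
Proof.
  intros [hm Hm].
  assert (Hlub : is_lub (LStar_set k x) (m * x - Lambda k m)).
  { split.
    - intros y [l [hl ->]]. apply Hm, hl.
    - intros b Hb. apply Hb. exists m. split; [exact hm | reflexivity]. }
  unfold LambdaStar. destruct (excluded_middle_informative _) as [Hex | Hnex].
  - destruct (constructive_indefinite_description _ Hex) as [z Hz]. simpl.
    apply (is_lub_u _ _ _ Hz Hlub).
  - exfalso. apply Hnex. exists (m * x - Lambda k m). exact Hlub.
Qed.

Lemma gamma_at_maximizer k nu m :
  0 < nu -> is_maximizer (Lambda k) (lam0 k) (1 / nu) m -> gamma k nu = m - nu * Lambda k m.
Proof.
  intros hnu Hm. unfold gamma. destruct (Rlt_dec 0 nu) as [_ | ?]; [| lra].
  rewrite (LambdaStar_at_maximizer k _ m Hm). field. lra.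
Qed.

Lemma gamma_at_0 k : gamma k 0 = lam0 k.
Proof. unfold gamma. destruct (Rlt_dec 0 0); [lra | reflexivity]. Qed.

Theorem proposition2p7 (k : R) (hk : 8 / 3 < k < 8) :
  forall x y t : R, 0 <= x -> 0 <= y -> x <> y -> 0 < t < 1 ->
    gamma k (t * x + (1 - t) * y) < t * gamma k x + (1 - t) * gamma k y.
Proof.
  intros x y t hx hy hxy ht.
  apply (dual_strictly_convex (Lambda k) (lam0 k) (gamma k)); try assumption.
  - apply gamma_at_0.
  - intros nu m hnu Hm. apply gamma_at_maximizer; assumption.
  - intros z hz. apply Lambda_dual_attained; assumption.
  - intros m hm. apply Lambda_smooth_majorant; assumption.
Qed.
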